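(* Let $\mathcal{J}=(a,b)$ be a finite interval, $m\geq3$, $\varepsilon\in[0,\varepsilon_0]$, $Q(\cdot;\varepsilon)\in L_1(\mathcal{J};\mathbb{C})$, $\alpha(\varepsilon),\beta(\varepsilon)\in\mathbb{C}^{m\times m}$, and let $A(\cdot;\varepsilon)$ be the matrix function $$A(\cdot;\varepsilon)=\begin{pmatrix} 0&1&0&\cdots&0&0\\ \vdots&\vdots&\ddots&&\vdots&\vdots\\ 0&0&0&\cdots&1&0\\ -i^{-m}Q(\cdot;\varepsilon)&0&0&\cdots&0&1\\ 0&i^{-m}Q(\cdot;\varepsilon)&0&\cdots&0&0 \end{pmatrix}$$ (ones on the superdiagonal, the displayed entries in the last two rows, all other entries zero). Suppose that, for all sufficiently small $\varepsilon$, the boundary value problem $w'=A(\cdot;\varepsilon)w+\varphi$, $\alpha(\varepsilon)w(a)+\beta(\varepsilon)w(b)=0$ has a Green matrix $G(t,s;\varepsilon)=(g_{ij}(t,s;\varepsilon))_{i,j=1}^m\in L_\infty(\mathcal{J}\times\mathcal{J})^{m\times m}$. Then (for such $\varepsilon$) the semi-homogeneous boundary value problem $$i^mD^{[m]}_\varepsilon y=f,\qquad \alpha(\varepsilon)\mathcal{Y}_\varepsilon(a)+\beta(\varepsilon)\mathcal{Y}_\varepsilon(b)=0\qquad(f\in L_2(\mathcal{J};\mathbb{C}))$$ has a Green function $\Gamma(t,s;\varepsilon)$, and $\Gamma(t,s;\varepsilon)=i^{-m}g_{1m}(t,s;\varepsilon)$ for almost all $(t,s)$.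
   Context: Quasi-derivatives: $D^{[k]}_\varepsilon y=y^{(k)}$ for $k=0,\dots,m-2$; $D^{[m-1]}_\varepsilon y=y^{(m-1)}+i^{-m}Q(\cdot;\varepsilon)y$; $D^{[m]}_\varepsilon y=(D^{[m-1]}_\varepsilon y)'-i^{-m}Q(\cdot;\varepsilon)D^{[1]}_\varepsilon y$; $\mathcal{Y}_\varepsilon(x)=(D^{[0]}_\varepsilon y(x),\dots,D^{[m-1]}_\varepsilon y(x))$. A Green matrix of the first-order problem is a matrix function $G$ such that for every $\varphi\in L_1(\mathcal{J})^m$ the problem has the unique solution $w(t)=\int_a^bG(t,s;\varepsilon)\varphi(s)\,ds$. A Green function of the scalar problem is a function $\Gamma$ such that for every $f\in L_2(\mathcal{J};\mathbb{C})$ the problem has the unique solution $y(t)=\int_a^b\Gamma(t,s;\varepsilon)f(s)\,ds$. *)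

From HB Require Import structures.
From mathcomp Require Import all_boot all_order all_algebra.
From mathcomp Require Import all_classical all_reals all_analysis.
From mathcomp Require Import complex.
Set Implicit Arguments. Unset Strict Implicit. Unset Printing Implicit Defensive.
Import Order.TTheory GRing.Theory Num.Theory.
Local Open Scope classical_set_scope.
Local Open Scope ring_scope.

Section Defs.
Variable R : realType.
Local Notation C := (R[i]).
Local Notation mu := (@lebesgue_measure R).

Definition iC : C := Complex 0 1.
Definition RtoC (x : R) : C := Complex x 0.

Definition cmeasurable (D : set R) (f : R -> C) :=
  measurable_fun D (fun x => complex.Re (f x)) /\
  measurable_fun D (fun x => complex.Im (f x)).

Definition cintegrable (D : set R) (f : R -> C) :=
  mu.-integrable D (fun x => (complex.Re (f x))%:E) /\
  mu.-integrable D (fun x => (complex.Im (f x))%:E).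

Definition cL2 (D : set R) (f : R -> C) :=
  cmeasurable D f /\
  mu.-integrable D (fun x => (complex.Re (f x) ^+ 2 + complex.Im (f x) ^+ 2)%:E).

Definition cint (D : set R) (f : R -> C) : C :=
  RtoC (Rintegral mu D (fun x => complex.Re (f x))) +
  iC * RtoC (Rintegral mu D (fun x => complex.Im (f x))).

Definition vintegrable (m : nat) (D : set R) (phi : R -> 'cV[C]_m) :=
  forall i : 'I_m, cintegrable D (fun x => phi x i ord0).

Definition vint (m : nat) (D : set R) (phi : R -> 'cV[C]_m) : 'cV[C]_m :=
  \col_i cint D (fun x => phi x i ord0).

(* the coefficient matrix A(t; eps) of the first order system, given the
   value q = Q(t; eps): ones on the superdiagonal, -i^{-m} q at position
   (m-1, 1) and i^{-m} q at position (m, 2) (1-based), zero elsewhere. *)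
Definition Amat (m : nat) (q : C) : 'M[C]_m :=
  \matrix_(i < m, j < m)
    if (j : nat) == (i : nat).+1 then 1
    else if ((i : nat) == m.-2) && ((j : nat) == 0%N) then - (iC ^- m * q)
    else if ((i : nat) == m.-1) && ((j : nat) == 1%N) then iC ^- m * q
    else 0.

(* w is a (Caratheodory) solution on [a,b] of
     w' = A w + phi,  alpha w(a) + beta w(b) = 0,
   i.e. w is absolutely continuous on [a,b] with w' = A w + phi a.e. *)
Definition sys_solution (a b : R) (m : nat) (A : R -> 'M[C]_m)
    (phi : R -> 'cV[C]_m) (alpha beta : 'M[C]_m) (w : R -> 'cV[C]_m) :=
  vintegrable `[a, b] (fun s => A s *m w s + phi s) /\
  (forall t, a <= t <= b ->
     w t = w a + vint `[a, t] (fun s => A s *m w s + phi s)) /\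
  alpha *m w a + beta *m w b = 0.

Definition green_matrix (a b : R) (m : nat) (A : R -> 'M[C]_m)
    (alpha beta : 'M[C]_m) (G : R -> R -> 'M[C]_m) :=
  forall phi : R -> 'cV[C]_m, vintegrable `]a, b[ phi ->
    exists w, sys_solution a b A phi alpha beta w /\
      (forall t, a < t < b ->
         vintegrable `]a, b[ (fun s => G t s *m phi s) /\
         w t = vint `]a, b[ (fun s => G t s *m phi s)) /\
      (forall w', sys_solution a b A phi alpha beta w' ->
         forall t, a <= t <= b -> w' t = w t).

(* yq k (k = 0, ..., m-1) are the quasi-derivatives D^{[k]} y on [a,b]
   and Dm is D^{[m]} y (defined a.e.); each of D^{[0]},...,D^{[m-1]} is
   absolutely continuous, written in integrated form:
     (D^{[k]} y)' = D^{[k+1]} y                         (k <= m-3)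
     (D^{[m-2]} y)' = y^{(m-1)} = D^{[m-1]} y - i^{-m} Q y
     (D^{[m-1]} y)' = D^{[m]} y + i^{-m} Q D^{[1]} y.                *)
Definition quasi_derivs (a b : R) (m : nat) (q : R -> C) (y : R -> C)
    (yq : nat -> R -> C) (Dm : R -> C) :=
  (forall t, a <= t <= b -> yq 0%N t = y t) /\
  (forall k, (k < m - 2)%N ->
     cintegrable `[a, b] (yq k.+1) /\
     forall t, a <= t <= b -> yq k t = yq k a + cint `[a, t] (yq k.+1)) /\
  (cintegrable `[a, b] (fun s => yq m.-1 s - iC ^- m * q s * yq 0%N s) /\
   forall t, a <= t <= b ->
     yq m.-2 t = yq m.-2 a + cint `[a, t] (fun s => yq m.-1 s - iC ^- m * q s * yq 0%N s)) /\
  (cintegrable `[a, b] (fun s => Dm s + iC ^- m * q s * yq 1%N s) /\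
   forall t, a <= t <= b ->
     yq m.-1 t = yq m.-1 a + cint `[a, t] (fun s => Dm s + iC ^- m * q s * yq 1%N s)).

Definition Yvec (m : nat) (yq : nat -> R -> C) (x : R) : 'cV[C]_m :=
  \col_(i < m) yq (i : nat) x.

Definition scalar_solution (a b : R) (m : nat) (q : R -> C)
    (alpha beta : 'M[C]_m) (f : R -> C) (y : R -> C) :=
  exists (yq : nat -> R -> C) (Dm : R -> C),
    quasi_derivs a b m q y yq Dm /\
    {ae mu, forall t, `]a, b[%classic t -> iC ^+ m * Dm t = f t} /\
    alpha *m Yvec m yq a + beta *m Yvec m yq b = 0.

Definition green_function (a b : R) (m : nat) (q : R -> C)
    (alpha beta : 'M[C]_m) (Gam : R -> R -> C) :=
  forall f : R -> C, cL2 `]a, b[ f ->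
    exists y, scalar_solution a b q alpha beta f y /\
      (forall t, a < t < b ->
         cintegrable `]a, b[ (fun s => Gam t s * f s) /\
         y t = cint `]a, b[ (fun s => Gam t s * f s)) /\
      (forall y', scalar_solution a b q alpha beta f y' ->
         forall t, a <= t <= b -> y' t = y t).

Definition cLinf2 (a b : R) (g : R -> R -> C) :=
  measurable_fun (`]a, b[%classic `*` `]a, b[%classic) (fun p : R * R => complex.Re (g p.1 p.2)) /\
  measurable_fun (`]a, b[%classic `*` `]a, b[%classic) (fun p : R * R => complex.Im (g p.1 p.2)) /\
  exists M : R, {ae (mu \x mu)%E, forall p : R * R,
     (`]a, b[%classic `*` `]a, b[%classic) p -> `|g p.1 p.2| <= RtoC M}.

End Defs.

Lemma first_lt (m : nat) : (3 <= m)%N -> (0 < m)%N.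
Proof. by case: m. Qed.
Lemma last_lt (m : nat) : (3 <= m)%N -> (m.-1 < m)%N.
Proof. by case: m. Qed.
(* 1-based indices 1 and m *)
Definition ind_1 (m : nat) (hm : (3 <= m)%N) : 'I_m := Ordinal (first_lt hm).
Definition ind_m (m : nat) (hm : (3 <= m)%N) : 'I_m := Ordinal (last_lt hm).

From HB Require Import structures.
From mathcomp Require Import all_boot all_order all_algebra.
From mathcomp Require Import all_classical all_reals all_analysis.
From mathcomp Require Import complex.
From mathcomp Require Import lra zify.
Set Implicit Arguments. Unset Strict Implicit. Unset Printing Implicit Defensive.
Import Order.TTheory GRing.Theory Num.Theory.
Local Open Scope classical_set_scope.
Local Open Scope ring_scope.

(* In the coordinates w = Y(y) = (D^{[0]} y, ..., D^{[m-1]} y) the scalar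
   problem is the first-order system: the rows of A(.) Y(y) say that the
   derivative of each quasi-derivative is the next one, with the Q-terms of
   the definition, and the last row leaves exactly D^{[m]} y.  Hence y solves
   i^m D^{[m]} y = f with the boundary condition iff Y(y) solves the system
   with phi = i^{-m} f e_m (admissible since L_2(J) is contained in L_1(J)),
   so y = (Y(y))_1 is the first entry of the integral of G phi, that is,
   the integral of i^{-m} g_{1m}(t, s) f(s).  Uniqueness passes from the
   system to the scalar problem in the same way, after correcting D^{[m]} y
   on a null set. *)

Section ComplexLebesgue.
Variable R : realType.
Local Notation C := (R[i]).
Local Notation mu := (@lebesgue_measure R).
Local Notation aeF := (ae_filter_ringOfSetsType mu).
Local Notation measurableR := (@measurable _ (measurableTypeR R)).

Lemma Re_mul (x y : C) :
  complex.Re (x * y) = complex.Re x * complex.Re y - complex.Im x * complex.Im y.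
Proof. by case: x => ? ?; case: y => ? ?. Qed.

Lemma Im_mul (x y : C) :
  complex.Im (x * y) = complex.Re x * complex.Im y + complex.Im x * complex.Re y.
Proof. by case: x => ? ?; case: y => ? ?. Qed.

Lemma Re_add (x y : C) : complex.Re (x + y) = complex.Re x + complex.Re y.
Proof. by case: x => ? ?; case: y => ? ?. Qed.

Lemma Im_add (x y : C) : complex.Im (x + y) = complex.Im x + complex.Im y.
Proof. by case: x => ? ?; case: y => ? ?. Qed.

Lemma iC_neq0 : @iC R != 0.
Proof. by apply/eqP => -[] /eqP; rewrite oner_eq0. Qed.

Section Integrable.
Variable D : set R.
Hypothesis mD : measurableR D.

Lemma cintegrable0 : cintegrable D (fun _ => 0).
Proof. by split; apply: (eq_integrable mD _ _ _) (integrable0 _ _) => x _. Qed.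

Lemma cintegrableZl (c : C) (f : R -> C) :
  cintegrable D f -> cintegrable D (fun x => c * f x).
Proof.
move=> [fr fi]; split.
- apply: (eq_integrable mD _ _ _) (integrableB mD (integrableZl mD (complex.Re c) fr)
    (integrableZl mD (complex.Im c) fi)) => x _.
  by rewrite /= Re_mul EFinB !EFinM.
- apply: (eq_integrable mD _ _ _) (integrableD mD (integrableZl mD (complex.Re c) fi)
    (integrableZl mD (complex.Im c) fr)) => x _.
  by rewrite /= Im_mul EFinD !EFinM.
Qed.

Lemma cintegrableS (E : set R) (f : R -> C) : measurableR E -> E `<=` D ->
  cintegrable D f -> cintegrable E f.
Proof. by move=> mE ED [fr fi]; split; apply: (integrableS mD mE ED). Qed.

Lemma cintegrable_cmeasurable (f : R -> C) : cintegrable D f -> cmeasurable D f.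
Proof.
move=> [fr fi]; split.
- exact: (measurable_realfun.measurable_EFinP D _).1 (measurable_int mu fr).
- exact: (measurable_realfun.measurable_EFinP D _).1 (measurable_int mu fi).
Qed.

Lemma cmeasurable_cst (c : C) : cmeasurable D (fun _ => c).
Proof. by split; exact: measurable_cst. Qed.

Lemma cmeasurableD (f g : R -> C) : cmeasurable D f -> cmeasurable D g ->
  cmeasurable D (fun x => f x + g x).
Proof.
move=> [fr fi] [gr gi]; split.
- under eq_fun do rewrite Re_add. exact: measurable_realfun.measurable_funD.
- under eq_fun do rewrite Im_add. exact: measurable_realfun.measurable_funD.
Qed.

Lemma cmeasurableM (f g : R -> C) : cmeasurable D f -> cmeasurable D g ->
  cmeasurable D (fun x => f x * g x).
Proof.
move=> [fr fi] [gr gi]; split.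
- under eq_fun do rewrite Re_mul.
  by apply: measurable_realfun.measurable_funB; apply: measurable_realfun.measurable_funM.
- under eq_fun do rewrite Im_mul.
  by apply: measurable_realfun.measurable_funD; apply: measurable_realfun.measurable_funM.
Qed.

Lemma cmeasurableS (E : set R) (f : R -> C) : E `<=` D ->
  cmeasurable D f -> cmeasurable E f.
Proof. by move=> ED [fr fi]; split; apply: measurable_funS ED _. Qed.

Lemma ae_eq_Rintegrable (h1 h2 : R -> R) :
  measurable_fun D h2 -> {ae mu, forall x, D x -> h1 x = h2 x} ->
  mu.-integrable D (EFin \o h1) ->
  mu.-integrable D (EFin \o h2) /\ Rintegral mu D h1 = Rintegral mu D h2.
Proof.
move=> m2 h12 i1.
have m1 : measurable_fun D h1.
  by apply/measurable_realfun.measurable_EFinP; exact: measurable_int i1.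
have h12E : {ae mu, forall x, D x -> (EFin \o h1) x = (EFin \o h2) x}.
  by apply: (@filterS _ _ aeF _ _ _ h12) => x h Dx /=; rewrite h.
have h12N : {ae mu, forall x, D x ->
    (EFin \o (fun x => `|h1 x|)) x = (EFin \o (fun x => `|h2 x|)) x}.
  by apply: (@filterS _ _ aeF _ _ _ h12) => x h Dx /=; rewrite h.
have mN (h : R -> R) : measurable_fun D h -> measurable_fun D (fun x => `|h x|).
  exact: measurableT_comp (@measurable_realfun.normr_measurable R setT).
split; last first.
  by rewrite /Rintegral (ae_eq_integral _ _ mD _ _ h12E) //;
    exact/measurable_realfun.measurable_EFinP.
apply/integrableP; split; first exact/measurable_realfun.measurable_EFinP.
have -> : (fun x => `|(EFin \o h2) x|%E) = EFin \o (fun x => `|h2 x|) by [].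
rewrite -(ae_eq_integral _ _ mD _ _ h12N).
- by case/integrableP: i1.
- by apply/measurable_realfun.measurable_EFinP; exact: mN.
- by apply/measurable_realfun.measurable_EFinP; exact: mN.
Qed.

Lemma ae_eq_cint (h1 h2 : R -> C) :
  cmeasurable D h2 -> {ae mu, forall x, D x -> h1 x = h2 x} ->
  cintegrable D h1 -> cintegrable D h2 /\ cint D h1 = cint D h2.
Proof.
move=> [mr mi] h12 [ir ii].
have [jr er] : mu.-integrable D (fun x => (complex.Re (h2 x))%:E) /\
    Rintegral mu D (fun x => complex.Re (h1 x)) = Rintegral mu D (fun x => complex.Re (h2 x)).
  by apply: ae_eq_Rintegrable mr _ ir; apply: (@filterS _ _ aeF _ _ _ h12) => x h Dx; rewrite h.
have [ji ei] : mu.-integrable D (fun x => (complex.Im (h2 x))%:E) /\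
    Rintegral mu D (fun x => complex.Im (h1 x)) = Rintegral mu D (fun x => complex.Im (h2 x)).
  by apply: ae_eq_Rintegrable mi _ ii; apply: (@filterS _ _ aeF _ _ _ h12) => x h Dx; rewrite h.
by split; [split | rewrite /cint er ei].
Qed.

End Integrable.

Lemma cmeasurable_itv_cc (a b : R) (f : R -> C) :
  cmeasurable `]a, b[ f -> cmeasurable `[a, b] f.
Proof.
by move=> [fr fi]; split; apply: measurable_realfun.measurable_fun_itv_cc;
  [exact: fr | exact: fi].
Qed.

Lemma cL2_cintegrable_itv (a b : R) (f : R -> C) :
  cL2 `]a, b[ f -> cintegrable `]a, b[ f.
Proof.
move=> [[fr fi] f2].
have mab : measurableR `]a, b[ by exact: measurable_itv.
have i1 : mu.-integrable `]a, b[ (fun _ => 1%:E).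
  apply/integrableP; split; first exact: measurable_cst.
  rewrite (_ : (fun _ => _) = cst 1%:E); last by apply: funext => x; rewrite /= normr1.
  rewrite integral_cst //= mul1e lebesgue_measure_itv /=.
  by case: ifP => _; rewrite ?ltry.
have dom := integrableD mab i1 f2.
have le_dom (r s : R) : `|r| <= `|1 + (r ^+ 2 + s ^+ 2)|.
  rewrite [X in _ <= X]ger0_norm; last by rewrite addr_ge0 ?addr_ge0 ?sqr_ge0.
  have r2 : `|r| ^+ 2 = r ^+ 2 by rewrite real_normK ?num_real.
  have := normr_ge0 r; have := sqr_ge0 s; nra.
split; apply: (le_integrable mab) dom => //.
- exact/measurable_realfun.measurable_EFinP.
- by move=> x _ /=; rewrite lee_fin le_dom.
- exact/measurable_realfun.measurable_EFinP.
- by move=> x _ /=; rewrite lee_fin (addrC (complex.Re (f x) ^+ 2)) le_dom.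
Qed.

Lemma ae_itv_oo_cc (a b t : R) (P : R -> Prop) : t <= b ->
  {ae mu, forall x, `]a, b[%classic x -> P x} ->
  {ae mu, forall x, `[a, t]%classic x -> P x}.
Proof.
move=> tb hP.
have ae_neq (c : R) : {ae mu, forall x, x <> c}.
  exists [set c]; split; first exact: measurable_set1.
    exact: lebesgue_measure_set1.
  by move=> x /= /contrapT.
apply: (@filterS2 _ _ aeF _ _ _ _ hP (@filterI _ _ aeF _ _ (ae_neq a) (ae_neq b))).
move=> x Px [xa xb]; rewrite /= !in_itv /= => /andP[ax xt]; apply: Px.
rewrite /= in_itv /= !lt_neqAle ax (le_trans xt tb) !andbT.
by apply/andP; split; apply/eqP => e; [apply: xa | apply: xb].
Qed.

End ComplexLebesgue.

Section AmatRows.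
Variable R : realType.
Local Notation C := (R[i]).
Variables (n : nat) (q : C) (v : 'cV[C]_n.+3).

Let inord_neq (j : 'I_n.+3) (k : nat) : (k < n.+3)%N -> j != inord k ->
  ((j : nat) == k) = false.
Proof.
move=> hk hj; apply/negbTE; apply: contra hj => /eqP e; apply/eqP/val_inj.
by rewrite /= inordK ?e.
Qed.

Lemma Amat_mul_shift (k : nat) : (k < n.+1)%N ->
  (Amat n.+3 q *m v) (inord k) ord0 = v (inord k.+1) ord0.
Proof.
move=> hk; rewrite mxE (bigD1 (inord k.+1)) //= big1 ?addr0.
  by rewrite mxE !inordK ?eqxx ?mul1r //; lia.
move=> j hj; rewrite mxE !inordK; last lia.
rewrite inord_neq //; last lia.
have -> : (k == n.+1) = false by apply/negbTE; lia.
have -> : (k == n.+2) = false by apply/negbTE; lia.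
by rewrite mul0r.
Qed.

Lemma Amat_mul_penult :
  (Amat n.+3 q *m v) (inord n.+1) ord0 =
  v (inord n.+2) ord0 - @iC R ^- n.+3 * q * v (inord 0) ord0.
Proof.
rewrite mxE (bigD1 (inord n.+2)) //= (bigD1 (inord 0)) /=; last first.
  by apply/eqP => /(congr1 val) /=; rewrite !inordK.
rewrite big1 ?addr0; first by rewrite !mxE !inordK ?eqxx //= mul1r mulNr.
move=> j /andP[j2 j0]; rewrite mxE !inordK // (inord_neq _ j2) // (inord_neq _ j0) //=.
by rewrite andbF (_ : (n.+1 == n.+2) = false) ?mul0r //; lia.
Qed.

Lemma Amat_mul_last :
  (Amat n.+3 q *m v) (inord n.+2) ord0 = @iC R ^- n.+3 * q * v (inord 1) ord0.
Proof.
rewrite mxE (bigD1 (inord 1)) //= big1 ?addr0.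
  by rewrite !mxE !inordK ?eqxx //= andbF.
move=> j j1; rewrite mxE !inordK // (inord_neq _ j1) //=.
have -> : ((j : nat) == n.+3) = false by apply/negbTE; have := ltn_ord j; lia.
by rewrite (_ : (n.+2 == n.+1) = false) ?andbF ?mul0r //; lia.
Qed.

End AmatRows.

Section QuasiDerivatives.
Variable R : realType.
Local Notation C := (R[i]).
Local Notation measurableR := (@measurable _ (measurableTypeR R)).

Definition lastvec (m : nat) (x : C) : 'cV[C]_m :=
  \col_(i < m) (if (i : nat) == m.-1 then x else 0).

Lemma mulmx_lastvec (m : nat) (M : 'M[C]_m) (x : C) (i j : 'I_m) :
  (j : nat) = m.-1 -> (M *m lastvec m x) i ord0 = M i j * x.
Proof.
move=> jE; rewrite mxE (bigD1 j) //= big1 ?addr0; first by rewrite mxE jE eqxx.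
move=> k kj; rewrite mxE; case: eqP => [kE|]; last by rewrite mulr0.
by case/eqP: kj; apply: val_inj; rewrite /= kE jE.
Qed.

Lemma Yvec_surj (m : nat) (w : R -> 'cV[C]_m) : exists yq, w = Yvec m yq.
Proof.
case: m w => [|n] w.
  by exists (fun _ _ => 0); apply: funext => t; apply/matrixP => -[].
exists (fun k t => w t (inord k) ord0); apply: funext => t.
by apply/matrixP => i j; rewrite !mxE (ord1 j) inord_val.
Qed.

Definition quasi_deriv_rhs (m : nat) (q : R -> C) (yq : nat -> R -> C)
    (Dm : R -> C) (k : nat) (s : R) : C :=
  if (k < m.-2)%N then yq k.+1 s
  else if k == m.-2 then yq m.-1 s - @iC R ^- m * q s * yq 0%N s
  else Dm s + @iC R ^- m * q s * yq 1%N s.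

Definition quasi_deriv_eqs (a b : R) (m : nat) (q : R -> C) (yq : nat -> R -> C)
    (Dm : R -> C) :=
  forall k, (k < m)%N ->
    cintegrable `[a, b] (quasi_deriv_rhs m q yq Dm k) /\
    forall t, a <= t <= b ->
      yq k t = yq k a + cint `[a, t] (quasi_deriv_rhs m q yq Dm k).

Lemma Amat_mul_Yvec (m : nat) (q : R -> C) (yq : nat -> R -> C) (Dm : R -> C)
    (s : R) : (3 <= m)%N ->
  Amat m (q s) *m Yvec m yq s + lastvec m (Dm s) =
  \col_(i < m) quasi_deriv_rhs m q yq Dm i s.
Proof.
case: m => [|[|[|n]]] // _; apply/matrixP => i j.
rewrite (ord1 j) mxE [RHS]mxE [lastvec _ _ _ _]mxE /quasi_deriv_rhs /=.
rewrite -[X in (_ *m _) X _]inord_val.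
have [ilt|ige] := ltnP i n.+1.
  rewrite Amat_mul_shift // mxE inordK; last lia.
  by rewrite (_ : ((i : nat) == n.+2) = false) ?addr0 //; apply/negbTE; lia.
have [iE|ine] := eqVneq (i : nat) n.+1.
  rewrite iE Amat_mul_penult !mxE !inordK //=.
  by rewrite (_ : (n.+1 == n.+2) = false) ?addr0 //; lia.
have iE : (i : nat) = n.+2 by have := ltn_ord i; lia.
by rewrite iE eqxx Amat_mul_last !mxE !inordK //= addrC.
Qed.

Section Rhs.
Variables (m : nat) (q : R -> C) (yq : nat -> R -> C) (Dm : R -> C).

Lemma quasi_deriv_rhs_lt (k : nat) : (k < m.-2)%N ->
  quasi_deriv_rhs m q yq Dm k = yq k.+1.
Proof. by move=> km; apply: funext => s; rewrite /quasi_deriv_rhs km. Qed.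

Lemma quasi_deriv_rhs_penult :
  quasi_deriv_rhs m q yq Dm m.-2 = fun s => yq m.-1 s - @iC R ^- m * q s * yq 0%N s.
Proof. by apply: funext => s; rewrite /quasi_deriv_rhs ltnn eqxx. Qed.

Lemma quasi_deriv_rhs_last : (2 <= m)%N ->
  quasi_deriv_rhs m q yq Dm m.-1 = fun s => Dm s + @iC R ^- m * q s * yq 1%N s.
Proof.
move=> hm; apply: funext => s; rewrite /quasi_deriv_rhs.
by rewrite ifF ?ifF //; apply/negbTE; lia.
Qed.

End Rhs.

Lemma vintegrable_lastvec (D : set R) (m : nat) (g : R -> C) :
  measurableR D ->
  cintegrable D g -> vintegrable D (fun s => lastvec m (g s)).
Proof.
move=> mD hg i; rewrite /=.
have -> : (fun s => lastvec m (g s) i ord0) =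
    fun s => if (i : nat) == m.-1 then g s else (0 : C).
  by apply/funext => s; rewrite /lastvec mxE.
by case: ((i : nat) == m.-1); last exact: cintegrable0.
Qed.

End QuasiDerivatives.

Section Correspondence.
Variable R : realType.
Local Notation C := (R[i]).
Local Notation mu := (@lebesgue_measure R).
Local Notation aeF := (ae_filter_ringOfSetsType mu).
Local Notation measurableR := (@measurable _ (measurableTypeR R)).
Variables (a b : R) (m : nat) (q : R -> C).
Hypothesis hm : (3 <= m)%N.

Lemma quasi_derivsE (y : R -> C) (yq : nat -> R -> C) (Dm : R -> C) :
  quasi_derivs a b m q y yq Dm <->
  (forall t, a <= t <= b -> yq 0%N t = y t) /\ quasi_deriv_eqs a b m q yq Dm.
Proof.
rewrite /quasi_derivs /quasi_deriv_eqs subn2; split.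
- move=> [y0 [hlt [hpen hlast]]]; split => // k km.
  have [klt|kge] := ltnP k m.-2; first by rewrite quasi_deriv_rhs_lt //; exact: hlt.
  have [->|kne] := eqVneq k m.-2; first by rewrite quasi_deriv_rhs_penult.
  have -> : k = m.-1 by lia.
  by rewrite quasi_deriv_rhs_last //; lia.
- move=> [y0 h]; split => //; split; [|split].
  + by move=> k km; rewrite -(quasi_deriv_rhs_lt q yq Dm km); apply: h; lia.
  + by rewrite -(quasi_deriv_rhs_penult m q yq Dm); apply: h; lia.
  + by rewrite -(quasi_deriv_rhs_last q yq Dm); [apply: h|]; lia.
Qed.

Lemma sys_solution_YvecE (yq : nat -> R -> C) (Dm : R -> C) (alpha beta : 'M[C]_m) :
  sys_solution a b (fun t => Amat m (q t)) (fun s => lastvec m (Dm s)) alpha beta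
    (Yvec m yq) <->
  quasi_deriv_eqs a b m q yq Dm /\
      alpha *m Yvec m yq a + beta *m Yvec m yq b = 0.
Proof.
have rhsE : (fun s => Amat m (q s) *m Yvec m yq s + lastvec m (Dm s)) =
    fun s => \col_(i < m) quasi_deriv_rhs m q yq Dm i s.
  by apply: funext => s; exact: Amat_mul_Yvec.
have entryE (i : 'I_m) :
    (fun s => (\col_(i < m) quasi_deriv_rhs m q yq Dm i s) i ord0) =
    quasi_deriv_rhs m q yq Dm i.
  by apply: funext => s; rewrite mxE.
rewrite /sys_solution /= rhsE /vintegrable; split.
- move=> [hint [heq hbd]]; split => // k km; split.
    by have := hint (Ordinal km); rewrite entryE.
  move=> t ht; have := congr1 (fun M : 'cV[C]_m => M (Ordinal km) ord0) (heq t ht).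
  by rewrite /= !mxE entryE.
- move=> [heqs hbd]; split; [|split] => //.
    by move=> i; rewrite entryE; exact: (heqs i (ltn_ord i)).1.
  move=> t ht; apply/matrixP => i j; rewrite (ord1 j) !mxE entryE.
  exact: (heqs i (ltn_ord i)).2.
Qed.

(* Changing D^{[m]} y on a null set only affects the last integral equation,
   whose integral does not see the change. *)
Lemma quasi_deriv_eqs_ae (yq : nat -> R -> C) (Dm Dm' : R -> C) :
  cmeasurable `]a, b[ q -> cmeasurable `]a, b[ Dm' ->
  {ae mu, forall x, `]a, b[%classic x -> Dm x = Dm' x} ->
  quasi_deriv_eqs a b m q yq Dm -> quasi_deriv_eqs a b m q yq Dm'.
Proof.
move=> mq mDm' hae heqs k km.
have mitv (x y : R) : measurableR `[x, y] by exact: measurable_itv.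
have [klt|->] : (k < m.-1)%N \/ k = m.-1 by lia.
  rewrite (_ : quasi_deriv_rhs m q yq Dm' k = quasi_deriv_rhs m q yq Dm k); first exact: heqs.
  apply: funext => s; rewrite /quasi_deriv_rhs; case: ifP => // /negbT kge.
  by have -> : k == m.-2 by apply/eqP; lia.
have [int1 _] := heqs 0%N ltac:(lia).
rewrite quasi_deriv_rhs_lt in int1; last lia.
have [intm eqm] := heqs m.-1 ltac:(lia).
rewrite !quasi_deriv_rhs_last in intm eqm *; try lia.
set rhs := fun s => Dm s + @iC R ^- m * q s * yq 1%N s.
set rhs' := fun s => Dm' s + @iC R ^- m * q s * yq 1%N s.
have mrhs' : cmeasurable `[a, b] rhs'.
  apply: cmeasurableD; first exact: cmeasurable_itv_cc.
  apply: cmeasurableM; last exact: cintegrable_cmeasurable int1.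
  by apply: cmeasurableM; [exact: cmeasurable_cst | exact: cmeasurable_itv_cc].
have ae_rhs (t : R) : t <= b -> {ae mu, forall x, `[a, t]%classic x -> rhs x = rhs' x}.
  move=> tb; apply: ae_itv_oo_cc tb _.
  by apply: (@filterS _ _ aeF _ _ _ hae) => x h /h; rewrite /rhs /rhs' => ->.
split; first exact: (ae_eq_cint (mitv a b) mrhs' (ae_rhs b (lexx b)) intm).1.
move=> t /[dup] ht /andP[_ tb]; rewrite eqm //.
have sub : `[a, t] `<=` `[a, b].
  by move=> x; rewrite /= !in_itv /= => /andP[-> xt]; exact: le_trans xt tb.
have intt := cintegrableS (mitv a b) (mitv a t) sub intm.
have mrhs't := cmeasurableS (mitv a b) sub mrhs'.
by congr (_ + _); apply: (ae_eq_cint (mitv a t) mrhs't (ae_rhs t tb) intt).2.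
Qed.

Lemma green_function_Amat (alpha beta : 'M[C]_m) (G : R -> R -> 'M[C]_m) :
  cintegrable `]a, b[ q ->
  green_matrix a b (fun t => Amat m (q t)) alpha beta G ->
  green_function a b q alpha beta
    (fun t s => @iC R ^- m * G t s (ind_1 hm) (ind_m hm)).
Proof.
move=> hq hG f hf.
have mab : measurableR `]a, b[ by exact: measurable_itv.
have iCm_neq0 : @iC R ^+ m != 0 by rewrite expf_neq0 // iC_neq0.
pose Dm s := @iC R ^- m * f s.
have [w [wsol [wrep wuniq]]] := hG (fun s => lastvec m (Dm s))
  (vintegrable_lastvec mab (cintegrableZl mab _ (cL2_cintegrable_itv hf))).
have [yq wE] := Yvec_surj w; rewrite wE {w wE} in wsol wrep wuniq.
have [heqs hbd] := (sys_solution_YvecE yq Dm alpha beta).1 wsol.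
have Yvec1E (yq' : nat -> R -> C) t : Yvec m yq' t (ind_1 hm) ord0 = yq' 0%N t.
  by rewrite mxE.
exists (yq 0%N); split; [|split].
- exists yq, Dm; split; first exact/(quasi_derivsE (yq 0%N) yq Dm).
  by split => //; apply: aeW => t _; rewrite /Dm mulVKf.
- move=> t ht; have [hint hrep] := wrep t ht.
  have GE : (fun s => (G t s *m lastvec m (Dm s)) (ind_1 hm) ord0) =
      fun s => @iC R ^- m * G t s (ind_1 hm) (ind_m hm) * f s.
    by apply: funext => s; rewrite (@mulmx_lastvec _ _ _ _ _ (ind_m hm)) // mulrCA mulrA.
  split; first by have := hint (ind_1 hm); rewrite GE.
  by rewrite -Yvec1E hrep mxE GE.
- move=> y' [yq' [Dm' [hqd' [hae hbd']]]] t ht.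
  have [y0' heqs'] := (quasi_derivsE y' yq' Dm').1 hqd'.
  have hae' : {ae mu, forall x, `]a, b[%classic x -> Dm' x = Dm x}.
    by apply: (@filterS _ _ aeF _ _ _ hae) => x h /h; rewrite /Dm => <-; rewrite mulKf.
  have mDm : cmeasurable `]a, b[ Dm by apply: cmeasurableM (cmeasurable_cst _ _) hf.1.
  have heqsD := quasi_deriv_eqs_ae (cintegrable_cmeasurable hq) mDm hae' heqs'.
  have := wuniq _ ((sys_solution_YvecE yq' Dm alpha beta).2 (conj heqsD hbd')) t ht.
  by move/(congr1 (fun M : 'cV[C]_m => M (ind_1 hm) ord0)); rewrite !Yvec1E y0'.
Qed.

End Correspondence.

Theorem lemma5 (R : realType) (a b : R) (hab : a < b) (m : nat) (hm : (3 <= m)%N)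
  (eps0 : R) (Q : R -> R -> R[i]) (alpha beta : R -> 'M[R[i]]_m)
  (G : R -> R -> R -> 'M[R[i]]_m) (delta : R) (hdelta : 0 < delta) :
  (forall eps, 0 <= eps <= eps0 -> cintegrable `]a, b[ (Q eps)) ->
  (forall eps, 0 <= eps <= eps0 -> eps < delta ->
     green_matrix a b (fun t => Amat m (Q eps t)) (alpha eps) (beta eps) (G eps) /\
     (forall i j : 'I_m, cLinf2 a b (fun t s => G eps t s i j))) ->
  forall eps, 0 <= eps <= eps0 -> eps < delta ->
    exists Gam : R -> R -> R[i],
      green_function a b (Q eps) (alpha eps) (beta eps) Gam /\
      {ae ((@lebesgue_measure R) \x (@lebesgue_measure R))%E, forall p : R * R,
         (`]a, b[%classic `*` `]a, b[%classic) p ->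
         Gam p.1 p.2 = @iC R ^- m * G eps p.1 p.2 (ind_1 hm) (ind_m hm)}.
Proof.
move=> hQ hG eps heps hdelta_eps; have [hgreen _] := hG eps heps hdelta_eps.
exists (fun t s => @iC R ^- m * G eps t s (ind_1 hm) (ind_m hm)); split; last exact: aeW.
exact: green_function_Amat (hQ eps heps) hgreen.
Qed.
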